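(* Under the standing setting and assumptions (A1)–(A3) described in the context, the following are equivalent: (a) $\mathcal R$ is upper semicontinuous at every point of $\mathcal X$; (b) $\mathcal R(\mathcal K)$ is bounded in $\mathcal M$ for every compact $\mathcal K\subset\mathcal X$; (c) for every $X\in\mathcal X$, every sequence $X_n\to X$ in $\mathcal X$ and every choice $Z_n\in\mathcal R(X_n)$, there exist $Z\in\mathcal R(X)$ and a subsequence $(Z_{n_k})$ with $Z_{n_k}\to Z$.
   Context: Let $\mathcal X$ be a Hausdorff, first countable, locally convex topological vector space over $\mathbb R$, partially ordered by a partial order $\geq$ with positive cone $\mathcal X_+=\{X\in\mathcal X: X\geq 0\}$. Let $\mathcal M\subset\mathcal X$ be a vector subspace with $1<\dim\mathcal M<\infty$, carrying the relative topology (boundedness in $\mathcal M$ refers to any norm on $\mathcal M$), and let $\pi:\mathcal M\to\mathbb R$ be linear. Standing assumptions: (A1) there is $U\in\mathcal M\cap\mathcal X_+$ with $\pi(U)=1$; (A2) $\mathcal A\subsetneq\mathcal X$ is closed, contains $0$, and satisfies $\mathcal A+\mathcal X_+\subset\mathcal A$; (A3) the map $\rho(X)=\inf\{\pi(Z): Z\in\mathcal M,\ X+Z\in\mathcal A\}$ is finitely valued and continuous on $\mathcal X$. The optimal payoff map is $\mathcal R(X)=\{Z\in\mathcal M: X+Z\in\mathcal A,\ \pi(Z)=\rho(X)\}$ and $\mathcal R(\mathcal K)=\bigcup_{X\in\mathcal K}\mathcal R(X)$. $\mathcal R$ is upper semicontinuous at $X$ if for every open $\mathcal U\subset\mathcal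 M$ with $\mathcal R(X)\subset\mathcal U$ there is an open neighborhood $\mathcal U_X$ of $X$ with $\mathcal R(Y)\subset\mathcal U$ for all $Y\in\mathcal U_X$. *)

From HB Require Import structures.
From mathcomp Require Import all_boot all_order all_algebra.
From mathcomp Require Import all_classical all_reals all_analysis.
Set Implicit Arguments. Unset Strict Implicit. Unset Printing Implicit Defensive.
Import Order.TTheory GRing.Theory Num.Theory numFieldNormedType.Exports.
Local Open Scope classical_set_scope.
Local Open Scope ring_scope.

Definition first_countable (T : topologicalType) : Prop :=
  forall x : T, exists B : nat -> set T,
    (forall n, nbhs x (B n)) /\ (forall U, nbhs x U -> exists n, B n `<=` U).

Definition partial_order (T : Type) (le : T -> T -> Prop) : Prop :=
  (forall x, le x x) /\ (forall x y, le x y -> le y x -> x = y) /\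
  (forall x y z, le x y -> le y z -> le x z).

Definition pos_cone (R : realType) (X : tvsType R) (le : X -> X -> Prop) : set X :=
  [set x | le 0 x].

Definition span_set (R : realType) (X : tvsType R) (n : nat) (b : 'I_n -> X) : set X :=
  [set z | exists c : 'I_n -> R, z = \sum_(i < n) c i *: b i].

Definition lin_indep (R : realType) (X : tvsType R) (n : nat) (b : 'I_n -> X) : Prop :=
  forall c : 'I_n -> R, \sum_(i < n) c i *: b i = 0 -> forall i, c i = 0.

Definition linear_on (R : realType) (X : tvsType R) (M : set X) (pi : X -> R) : Prop :=
  forall (a : R) (y z : X), M y -> M z -> pi (a *: y + z) = a * pi y + pi z.

(* boundedness in M = span_set b, w.r.t. the norm |z| = max_i |c_i| where
   z = \sum_i c_i b_i (a norm on M when b is linearly independent) *)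
Definition bounded_in_span (R : realType) (X : tvsType R) (n : nat) (b : 'I_n -> X)
  (S : set X) : Prop :=
  exists C : R, forall z, S z ->
    exists c : 'I_n -> R, z = \sum_(i < n) c i *: b i /\ forall i, `|c i| <= C.

Definition rho (R : realType) (X : tvsType R) (M A : set X) (pi : X -> R) (x : X) : R :=
  inf [set pi z | z in [set z | M z /\ A (x + z)]].

Definition optR (R : realType) (X : tvsType R) (M A : set X) (pi : X -> R) (x : X) : set X :=
  [set z | M z /\ A (x + z) /\ pi z = rho M A pi x].

Definition optR_set (R : realType) (X : tvsType R) (M A : set X) (pi : X -> R) (K : set X)
  : set X := \bigcup_(x in K) optR M A pi x.

(* upper semicontinuity at x, open sets of M being the relatively open ones V `&` M *)
Definition usc_at (R : realType) (X : tvsType R) (M A : set X) (pi : X -> R) (x : X) : Prop :=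
  forall V : set X, open V -> optR M A pi x `<=` V `&` M ->
    exists W : set X, open W /\ W x /\
      forall y, W y -> optR M A pi y `<=` V `&` M.

(* The finite-dimensional subspace M carries the topology of its coefficients:
   if \sum_i c_k i *: b i converges in the Hausdorff space X, the coefficients
   c_k stay bounded, since otherwise normalising them yields, by
   Bolzano-Weierstrass, a coefficient vector of norm 1 whose combination is 0.
   Together with Bolzano-Weierstrass and the closedness of the graph of R (A is
   closed and rho is continuous), bounded selections of R have subsequences
   converging into R(X); this gives (b) -> (c), and (c) -> (b) because compact
   sets are sequentially compact in a first countable space. (c) -> (a) is the
   sequential description of upper semicontinuity. For (a) -> (c), a selection
   Z_n whose coefficients diverge has a closed range, so if it avoids R(X) the
   complement of its range is an open set around R(X) that upper
   semicontinuity forbids the Z_n to leave. It does avoid R(X) eventually,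
   because R(X) is bounded: by R(X + aU) = R(X) - aU, an unbounded R(X) would
   produce diverging selections of R(X + U/(k+1)) outside R(X). *)

From HB Require Import structures.
From mathcomp Require Import all_boot all_order all_algebra.
From mathcomp Require Import all_classical all_reals all_analysis.
From mathcomp Require Import lra.
Import Order.TTheory GRing.Theory Num.Theory numFieldNormedType.Exports.
Local Open Scope classical_set_scope.
Local Open Scope ring_scope.
Set Implicit Arguments. Unset Strict Implicit. Unset Printing Implicit Defensive.

Section tvs_cvg.
Context {R : numFieldType} {E : tvsType R} {T : Type} {F : set_system T} {FF : Filter F}.

Lemma tvs_cvgD (f g : T -> E) (a c : E) :
  f @ F --> a -> g @ F --> c -> (fun x => f x + g x) @ F --> a + c.
Proof. by move=> fa gc; apply: continuous2_cvg fa gc; exact: (@add_continuous E (a, c)). Qed.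

Lemma tvs_cvgZ (s : T -> R) (f : T -> E) (k : R) (a : E) :
  s @ F --> k -> f @ F --> a -> (fun x => s x *: f x) @ F --> k *: a.
Proof.
move=> sk fa; apply: (@continuous2_cvg _ R^o _ _ F _ s f (fun (r : R^o) v => r *: v)) => //.
exact: (@scale_continuous R E (k, a)).
Qed.

Lemma tvs_cvg_sum (I : Type) (r : seq I) (f : T -> I -> E) (l : I -> E) :
  (forall i, (fun x => f x i) @ F --> l i) ->
  (fun x => \sum_(i <- r) f x i) @ F --> \sum_(i <- r) l i.
Proof.
move=> fl; elim: r => [|i r IHr].
  by under eq_fun do rewrite big_nil; rewrite big_nil; exact: cvg_cst.
by rewrite big_cons; under eq_fun do rewrite big_cons; exact: tvs_cvgD.
Qed.

End tvs_cvg.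

Lemma increasing_geq (phi : nat -> nat) :
  {homo phi : k l / (k < l)%N} -> forall k, (k <= phi k)%N.
Proof. by move=> phi_incr; elim=> // k IHk; exact: leq_ltn_trans IHk (phi_incr _ _ _). Qed.

Lemma cvg_comp_geq {T : Type} (u : nat -> T) (G : set_system T) (g : nat -> nat) :
  (forall k, (k <= g k)%N) -> u @ \oo --> G -> (u \o g) @ \oo --> G.
Proof.
move=> g_ge ul; apply: cvg_comp ul => P [N _ PN].
by exists N => // k /= Nk; apply: PN; exact: leq_trans Nk (g_ge k).
Qed.

Lemma cvg_subseq {T : Type} (u : nat -> T) (G : set_system T) (phi : nat -> nat) :
  {homo phi : k l / (k < l)%N} -> u @ \oo --> G -> (u \o phi) @ \oo --> G.
Proof. by move=> /increasing_geq; exact: cvg_comp_geq. Qed.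

Lemma increasing_choice (Q : nat -> nat -> Prop) :
  (forall j N, exists2 k, (N <= k)%N & Q j k) ->
  exists phi : nat -> nat, {homo phi : k l / (k < l)%N} /\ forall j, Q j (phi j).
Proof.
move=> hQ; have /choice [h /all_and2 [h_ge h_Q]] :
    forall jN : nat * nat, exists k, (jN.2 <= k)%N /\ Q jN.1 k.
  by move=> [j N]; have [k] := hQ j N; exists k.
pose phi := fix phi j := if j is j'.+1 then h (j, (phi j').+1) else h (0, 0)%N.
exists phi; split; last by case=> [|j]; exact: (h_Q (_, _)).
by apply: homo_ltn => [? ? ?|k]; [exact: ltn_trans | exact: (h_ge (_, _))].
Qed.

Lemma increasing_seq_homo (phi : nat -> nat) :
  increasing_seq phi -> {homo phi : k l / (k < l)%N}.
Proof. by move=> /increasing_seqP phiS; apply: homo_ltn => // ? ? ?; exact: ltn_trans. Qed.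

Section real_sequences.
Context {R : realType}.

Lemma bolzano_weierstrass_vec (I : finType) (c : nat -> I -> R) (C : R) :
  (forall k i, `|c k i| <= C) ->
  exists phi : nat -> nat, {homo phi : k l / (k < l)%N} /\
    exists d : I -> R, forall i, (fun k => c (phi k) i) @ \oo --> d i.
Proof.
move=> cC.
suff [phi [phi_incr [d cd]]] : exists phi : nat -> nat, {homo phi : k l / (k < l)%N} /\
    exists d : I -> R, forall i, i \in enum I -> (fun k => c (phi k) i) @ \oo --> d i.
  by exists phi; split => //; exists d => i; apply: cd; rewrite mem_enum.
elim: (enum I) => [|j s [phi [phi_incr [d cd]]]].
  by exists id; split => //; exists (fun=> 0).
have /bolzano_weierstrass [psi /increasing_seq_homo psi_incr /cvg_ex [l cjl]] :
    bounded_fun (fun k => c (phi k) j).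
  exists C; split; first exact: num_real.
  by move=> D CD y _ /=; apply: le_trans (cC _ _) (ltW CD).
exists (phi \o psi); split; first by move=> k m km; apply/phi_incr/psi_incr.
exists (fun i => if i == j then l else d i) => i; rewrite inE.
by case: eqP => [-> _ | _ /= i_s]; [exact: cjl | exact: cvg_subseq psi_incr (cd i i_s)].
Qed.

Lemma unbounded_frequently (u : nat -> R) :
  (forall C, exists k, C < u k) -> forall C N, exists2 k, (N <= k)%N & C < u k.
Proof.
(* The bound below dominates both C and the first N terms of u. *)
move=> u_unb C N; have [k Ck] := u_unb (`|C| + \sum_(i < N) `|u i|).
exists k; last by apply: le_lt_trans Ck; rewrite ler_wpDr ?sumr_ge0 ?ler_norm.
rewrite leqNgt; apply/negP => kN; move: Ck; apply/negP; rewrite -leNgt.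
apply: le_trans (ler_norm _) _; rewrite ler_wpDl // (bigD1 (Ordinal kN)) //=.
by rewrite lerDl sumr_ge0.
Qed.

Lemma bounded_subseq_or_cvgy (u : nat -> R) :
  (exists C phi, {homo phi : k l / (k < l)%N} /\ forall k, u (phi k) <= C) \/
  u @ \oo --> +oo.
Proof.
have [uy|not_uy] := pselect (u @ \oo --> +oo); [by right | left].
have /existsNP [C not_ev] : ~ forall C, \forall k \near \oo, C < u k.
  by move/cvgryPgt.
exists C; apply: (@increasing_choice (fun _ k => u k <= C)) => _ N.
apply: contrapT => no_k; apply: not_ev; exists N => // k /= Nk.
by rewrite ltNge; apply/negP => ukC; exact: no_k (ex_intro2 _ _ k Nk ukC).
Qed.

End real_sequences.

Section norm1.
Context {R : realType} {I : finType}.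

Definition norm1 (c : I -> R) : R := \sum_i `|c i|.

Lemma norm1_ge0 (c : I -> R) : 0 <= norm1 c.
Proof. exact: sumr_ge0. Qed.

Lemma ler_norm1 (c : I -> R) i : `|c i| <= norm1 c.
Proof. by rewrite /norm1 (bigD1 i) //= lerDl sumr_ge0. Qed.

Lemma norm1D (c d : I -> R) : norm1 (fun i => c i + d i) <= norm1 c + norm1 d.
Proof. by rewrite /norm1 -big_split ler_sum // => i _; exact: ler_normD. Qed.

Lemma norm1Z (a : R) (c : I -> R) : norm1 (fun i => a * c i) = `|a| * norm1 c.
Proof. by rewrite /norm1 mulr_sumr; apply: eq_bigr => i _; rewrite normrM. Qed.

Lemma norm1_cvg (c : nat -> I -> R) (d : I -> R) :
  (forall i, (fun k => c k i) @ \oo --> d i) -> (fun k => norm1 (c k)) @ \oo --> norm1 d.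
Proof. by move=> cd; apply: tvs_cvg_sum => i; exact: cvg_norm. Qed.

End norm1.

Lemma cvg_compact_range {T : topologicalType} (u : nat -> T) (x : T) :
  u @ \oo --> x -> compact ([set x] `|` range u).
Proof.
move=> ux F PF FK.
(* Unless x is a cluster point, F lives on finitely many terms of u. *)
have [x_clu|x_nclu] := pselect (cluster F x); first by exists x; split => //; left.
have [G [V [FG xV GV]]] : exists G V, [/\ F G, nbhs x V & forall y, G y -> ~ V y].
  apply: contrapT => nGV; apply: x_nclu => G V FG xV.
  apply: contrapT => /forallNP GV0; apply: nGV; exists G, V; split => // y Gy Vy.
  exact: GV0 y (conj Gy Vy).
have [N _ uV] := ux V xV.
have F_head : F (u @` `I_N).
  apply: filterS (filterI FG FK) => y [Gy [yx|[k _ ukx]]].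
    by rewrite yx in Gy; have := GV x Gy (nbhs_singleton xV).
  rewrite -{}ukx in Gy *.
  exists k => //; rewrite /= ltnNge; apply/negP => Nk.
  exact: GV (u k) Gy (uV k Nk).
have [_ [[k kN <-] uk_clu]] := finite_compact (finite_image u (finite_II N)) PF F_head.
by exists (u k); split => //; right; exists k.
Qed.

Section first_countable_spaces.
Context {T : topologicalType} (fcT : first_countable T).

Lemma first_countable_seq_cvg (x : T) :
  exists B : nat -> set T, (forall j, nbhs x (B j)) /\
    forall u : nat -> T, (forall j, B j (u j)) -> u @ \oo --> x.
Proof.
have [B0 [B0x B0_base]] := fcT x.
exists (fun j => [set y | forall i, (i <= j)%N -> B0 i y]); split.
  elim=> [|j IHj].
    by apply: filterS (B0x 0%N) => y B0y i; rewrite leqn0 => /eqP ->.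
  apply: filterS (filterI IHj (B0x j.+1)) => y [B0y B0jy] i.
  by rewrite leq_eqVlt ltnS => /orP[/eqP -> | /B0y].
move=> u uB U /B0_base [j B0U]; exists j => // k /= jk.
by apply: B0U; exact: uB k j jk.
Qed.

Lemma frequently_subseq_cvg (u : nat -> T) (p : T) :
  (forall V, nbhs p V -> forall N, exists2 k, (N <= k)%N & V (u k)) ->
  exists phi : nat -> nat, {homo phi : k l / (k < l)%N} /\ (u \o phi) @ \oo --> p.
Proof.
move=> u_freq; have [B [Bp B_cvg]] := first_countable_seq_cvg p.
have [phi [phi_incr Bphi]] := @increasing_choice (fun j k => B j (u k)) (fun j => u_freq _ (Bp j)).
by exists phi; split => //; exact: B_cvg.
Qed.

Lemma compact_subseq_cvg (K : set T) (u : nat -> T) :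
  compact K -> (forall k, K (u k)) ->
  exists p (phi : nat -> nat),
    [/\ K p, {homo phi : k l / (k < l)%N} & (u \o phi) @ \oo --> p].
Proof.
move=> cK Ku; have [|p [Kp p_clu]] := cK (u @ \oo) _.
  by exists 0%N => // k _; exact: Ku.
have [|phi [phi_incr uphi_p]] := @frequently_subseq_cvg u p; last by exists p, phi.
move=> V pV N; have [|_ [[k Nk <-] Vuk]] := p_clu (u @` [set k | (N <= k)%N]) V _ pV.
  by exists N => // k Nk; exists k.
by exists k.
Qed.

End first_countable_spaces.

Section linear_combinations.
Context {R : realType} {X : tvsType R} (n : nat) (b : 'I_n -> X).

Definition lincomb (c : 'I_n -> R) : X := \sum_(i < n) c i *: b i.

Lemma lincombD (c d : 'I_n -> R) : lincomb c + lincomb d = lincomb (fun i => c i + d i).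
Proof. by rewrite /lincomb -big_split; apply: eq_bigr => i _; rewrite scalerDl. Qed.

Lemma lincombZ (a : R) (c : 'I_n -> R) : a *: lincomb c = lincomb (fun i => a * c i).
Proof. by rewrite /lincomb scaler_sumr; apply: eq_bigr => i _; rewrite scalerA. Qed.

Lemma lincombB (c d : 'I_n -> R) : lincomb c - lincomb d = lincomb (fun i => c i - d i).
Proof. by rewrite /lincomb -sumrB; apply: eq_bigr => i _; rewrite scalerBl. Qed.

Lemma lincomb_cvg (c : nat -> 'I_n -> R) (d : 'I_n -> R) :
  (forall i, (fun k => c k i) @ \oo --> d i) ->
  (fun k => lincomb (c k)) @ \oo --> lincomb d.
Proof. by move=> cd; apply: tvs_cvg_sum => i; exact: tvs_cvgZ (cd i) (cvg_cst _). Qed.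

Hypothesis hX : hausdorff_space X.
Hypothesis hb : lin_indep b.

Lemma lincomb_normalized_not_cvg0 (f : nat -> 'I_n -> R) :
  (forall k, norm1 (f k) = 1) -> ~ (fun k => lincomb (f k)) @ \oo --> 0.
Proof.
move=> f1 f0; have f_le1 k i : `|f k i| <= 1 by rewrite -(f1 k) ler_norm1.
have [phi [phi_incr [d fd]]] := bolzano_weierstrass_vec f_le1.
have d0 : forall i, d i = 0.
  by apply: hb; apply: (cvg_unique hX (lincomb_cvg fd)); exact: cvg_subseq phi_incr f0.
have nd : norm1 d = 0 by rewrite /norm1 big1 // => i _; rewrite d0 normr0.
have := norm1_cvg fd; rewrite nd (_ : (fun k => norm1 (f (phi k))) = cst 1).
  by move/(cvg_unique (@norm_hausdorff _ R^o) (cvg_cst (1 : R)))/eqP; rewrite oner_eq0.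
by apply/funext => k; rewrite f1.
Qed.

Lemma cvg_lincomb_bounded (c : nat -> 'I_n -> R) (p : X) :
  (fun k => lincomb (c k)) @ \oo --> p -> exists C, forall k, norm1 (c k) <= C.
Proof.
move=> cp; apply: contrapT => /forallNP c_unb.
have /unbounded_frequently c_freq C : exists k, C < norm1 (c k).
  by have /existsNP [k /negP] := c_unb C; rewrite -ltNge; exists k.
have [phi [phi_incr c_big]] :=
  @increasing_choice (fun j k => j.+1%:R < norm1 (c k)) (fun j => c_freq j.+1%:R).
have c_gt0 k : 0 < norm1 (c (phi k)) by apply: lt_trans (c_big k).
pose s k := (norm1 (c (phi k)))^-1.
apply: (@lincomb_normalized_not_cvg0 (fun k i => s k * c (phi k) i)).
  by move=> k; rewrite norm1Z gtr0_norm ?invr_gt0 // mulVf // gt_eqF.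
have s0 : s @ \oo --> 0.
  apply: (@squeeze_cvgr _ _ _ _ (cst 0) harmonic) (cvg_cst _) cvg_harmonic.
  near=> k; rewrite invr_ge0 ltW //= lef_pV2 ?posrE ?ltW //; exact: c_big.
under eq_fun do rewrite -lincombZ.
by rewrite -(scale0r p); exact: tvs_cvgZ s0 (cvg_subseq phi_incr cp).
Unshelve. all: by end_near.
Qed.

Hypothesis fcX : first_countable X.

Lemma closed_range_lincomb_cvgy (t : nat -> 'I_n -> R) :
  (fun k => norm1 (t k)) @ \oo --> +oo -> closed (range (fun k => lincomb (t k))).
Proof.
move=> t_y p p_cl; apply: contrapT => p_out.
have [|phi [phi_incr tphi_p]] := frequently_subseq_cvg fcX (u := fun k => lincomb (t k)) (p := p).
  move=> V pV N; pose head := [set lincomb (t k) | k in `I_N].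
  have head_closed : closed head.
    apply: (accessible_finite_set_closed.1 (hausdorff_accessible hX)).
    exact/finite_image/finite_II.
  have [|_ [[k _ <-] [Vtk tk_tail]]] := p_cl (V `&` ~` head).
    apply: (filterI pV); apply: open_nbhs_nbhs; split; first exact: closed_openC head_closed.
    by rewrite /setC /= => -[k _ tkp]; apply: p_out; exists k.
  exists k => //; rewrite leqNgt; apply/negP => kN; apply: tk_tail; by exists k.
have [C tC] := cvg_lincomb_bounded tphi_p.
have [N _ tN] := cvgry_gt (cvg_subseq phi_incr t_y) C.
by have := tN N (leqnn N); rewrite ltNge tC.
Qed.

End linear_combinations.

Section optimal_payoffs.
Context {R : realType} {X : tvsType R} (n : nat) (b : 'I_n -> X) (pi : X -> R) (A : set X).
Hypothesis pi_linear : linear_on (span_set b) pi.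

Local Notation M := (span_set b).
Local Notation optimal := (optR (span_set b) A pi).
Local Notation risk := (rho (span_set b) A pi).

Definition optR_usc := forall x, usc_at M A pi x.

Definition optR_compact_bounded :=
  forall K : set X, compact K -> bounded_in_span b (optR_set M A pi K).

Definition optR_subseq_cvg :=
  forall (x : X) (xs zs : nat -> X), xs @ \oo --> x -> (forall k, optimal (xs k) (zs k)) ->
    exists z, exists phi : nat -> nat, optimal x z /\
      {homo phi : k l / (k < l)%N} /\ (zs \o phi) @ \oo --> z.

Lemma span_lincomb (c : 'I_n -> R) : M (lincomb b c).
Proof. by exists c. Qed.

Lemma span_scale_add (a : R) (y z : X) : M y -> M z -> M (a *: y + z).
Proof.
by move=> [c ->] [d ->]; rewrite -!/(lincomb b _) lincombZ lincombD; exact: span_lincomb.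
Qed.

Lemma pi_lincomb (c : 'I_n -> R) : pi (lincomb b c) = \sum_i c i * pi (b i).
Proof.
have M0 : M 0 by exists (fun=> 0); rewrite big1 // => i _; rewrite scale0r.
have pi0 : pi 0 = 0.
  by have := pi_linear 1 M0 M0; rewrite scaler0 addr0 mul1r -{1}(addr0 (pi 0)) => /addrI.
suff [] : M (lincomb b c) /\ pi (lincomb b c) = \sum_i c i * pi (b i) by [].
apply: (big_ind2 (fun x r => M x /\ pi x = r)) => [//|x1 r1 x2 r2 [Mx1 <-] [Mx2 <-]|i _].
  split; first by rewrite -[x1]scale1r; exact: span_scale_add.
  by rewrite -{1}[x1]scale1r pi_linear // mul1r.
have Mbi : M (b i).
  exists (fun j => (j == i)%:R); rewrite (bigD1 i) //= eqxx scale1r big1 ?addr0 //.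
  by move=> j /negPf ->; rewrite scale0r.
split; first by rewrite -[c i *: b i]addr0; exact: span_scale_add.
by rewrite -[c i *: b i]addr0 pi_linear // pi0 addr0.
Qed.

Hypothesis A_closed : closed A.
Hypothesis risk_cont : continuous risk.

Lemma optR_closed_graph (xs : nat -> X) (x : X) (c : nat -> 'I_n -> R) (d : 'I_n -> R) :
  xs @ \oo --> x -> (forall k, optimal (xs k) (lincomb b (c k))) ->
  (forall i, (fun k => c k i) @ \oo --> d i) -> optimal x (lincomb b d).
Proof.
move=> xs_x opt_c cd; split; first exact: span_lincomb.
split.
  apply: (@closed_cvg _ _ _ _ (fun k => xs k + lincomb b (c k)) A A_closed)
    (tvs_cvgD xs_x (lincomb_cvg cd)).
  by apply: nearW => k; have [_ []] := opt_c k.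
have pi_risk : (fun k => pi (lincomb b (c k))) = risk \o xs.
  by apply/funext => k; have [_ [_ ->]] := opt_c k.
have pi_c_risk : (fun k => pi (lincomb b (c k))) @ \oo --> risk x.
  by rewrite pi_risk; apply: continuous_cvg _ xs_x; exact: risk_cont.
have pi_c_d : (fun k => pi (lincomb b (c k))) @ \oo --> pi (lincomb b d).
  rewrite pi_lincomb; under eq_fun do rewrite pi_lincomb.
  by apply: tvs_cvg_sum => i; exact: cvgM (cd i) (cvg_cst _).
by apply: (cvg_unique (@norm_hausdorff _ R^o) pi_c_d).
Qed.

Lemma optR_bounded_selection_subseq (xs zs : nat -> X) (x : X) (c : nat -> 'I_n -> R) (C : R) :
  xs @ \oo --> x -> (forall k, optimal (xs k) (zs k)) ->
  (forall k, zs k = lincomb b (c k)) -> (forall k i, `|c k i| <= C) ->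
  exists z, exists phi : nat -> nat, optimal x z /\
    {homo phi : k l / (k < l)%N} /\ (zs \o phi) @ \oo --> z.
Proof.
move=> xs_x opt_zs zs_c cC; have [phi [phi_incr [d cd]]] := bolzano_weierstrass_vec cC.
exists (lincomb b d), phi; split; [|split] => //.
  apply: (@optR_closed_graph (xs \o phi) _ (fun k => c (phi k))) => //.
    exact: cvg_subseq phi_incr xs_x.
  by move=> k; rewrite /= -zs_c.
have -> : zs \o phi = (fun k => lincomb b (c (phi k))) by apply/funext => k; exact: zs_c.
exact: lincomb_cvg.
Qed.

Variables (U : X) (U_span : M U) (piU : pi U = 1).
Hypothesis risk_finite : forall x,
  [set pi z | z in [set z | M z /\ A (x + z)]] !=set0 /\
  has_lbound [set pi z | z in [set z | M z /\ A (x + z)]].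

Lemma span_pi_sub_scaleU (z : X) (a : R) : M z -> M (z - a *: U) /\ pi (z - a *: U) = pi z - a.
Proof.
move=> Mz; rewrite -scaleNr addrC; split; first exact: span_scale_add.
by rewrite pi_linear // piU mulr1 addrC.
Qed.

Lemma risk_translate_le (y : X) (a : R) : risk (y + a *: U) <= risk y - a.
Proof.
rewrite lerBrDr; apply: lb_le_inf (risk_finite y).1 _ => _ [z [Mz Ayz] <-].
have [Mz' piz'] := span_pi_sub_scaleU a Mz.
rewrite -lerBrDr -piz'; apply: (ge_inf (risk_finite _).2).
by exists (z - a *: U) => //; split => //; rewrite addrACA subrr addr0.
Qed.

Lemma risk_translate (y : X) (a : R) : risk (y + a *: U) = risk y - a.
Proof.
apply/le_anti; rewrite risk_translate_le /= lerBlDr.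
by have := risk_translate_le (y + a *: U) (- a); rewrite scaleNr addrK opprK.
Qed.

Lemma optR_translate (y z : X) (a : R) : optimal y z -> optimal (y + a *: U) (z - a *: U).
Proof.
move=> [Mz [Ayz piz]]; have [Mz' piz'] := span_pi_sub_scaleU a Mz.
split=> //; split; last by rewrite piz' piz risk_translate.
by rewrite addrACA subrr addr0.
Qed.

Hypothesis hX : hausdorff_space X.
Hypothesis fcX : first_countable X.
Hypothesis hb : lin_indep b.

Lemma usc_no_divergent_selection (x : X) (ys : nat -> X) (t : nat -> 'I_n -> R) :
  ys @ \oo --> x -> (forall k, optimal (ys k) (lincomb b (t k))) ->
  (fun k => norm1 (t k)) @ \oo --> +oo ->
  (forall k, ~ optimal x (lincomb b (t k))) -> ~ usc_at M A pi x.
Proof.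
move=> ys_x opt_t t_y t_out usc_x.
have open_out : open (~` range (fun k => lincomb b (t k))).
  exact/closed_openC/(closed_range_lincomb_cvgy hX hb fcX t_y).
have [|W [oW [Wx W_V]]] := usc_x _ open_out.
  move=> z opt_z; split; last by case: opt_z.
  by move=> [k _ tkz]; apply: (t_out k); rewrite tkz.
have [N _ ysW] := ys_x W (open_nbhs_nbhs (conj oW Wx)).
have [+ _] := W_V (ys N) (ysW N (leqnn N)) _ (opt_t N).
by apply; exists N.
Qed.

Lemma usc_optR_bounded (x : X) : usc_at M A pi x ->
  exists C, forall c, optimal x (lincomb b c) -> norm1 c <= C.
Proof.
move=> usc_x; have [u U_u] := U_span; rewrite -/(lincomb b u) in U_u.
apply: contrapT => /forallNP unb.
have /choice [w /all_and2 [opt_w w_big]] :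
    forall k : nat, exists c, optimal x (lincomb b c) /\ k%:R + norm1 u < norm1 c.
  move=> k; have /existsNP [c /not_implyP [opt_c /negP]] := unb (k%:R + norm1 u).
  by rewrite -ltNge; exists c.
pose t k i := w k i - harmonic k * u i.
have opt_t k : optimal (x + harmonic k *: U) (lincomb b (t k)).
  have -> : lincomb b (t k) = lincomb b (w k) - harmonic k *: U.
    by rewrite U_u lincombZ lincombB.
  exact: optR_translate.
apply: (usc_no_divergent_selection _ opt_t _ _ usc_x).
- rewrite -[x in _ --> x]addr0; apply: tvs_cvgD; first exact: cvg_cst.
  by rewrite -(scale0r U); exact: tvs_cvgZ cvg_harmonic (cvg_cst _).
- apply/cvgryPge => C; near=> k.
  have w_le : norm1 (w k) <= norm1 (t k) + norm1 u.
    have -> : w k = (fun i => t k i + harmonic k * u i) by apply/funext => i; rewrite subrK.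
    apply: le_trans (norm1D _ _) _; rewrite lerD2l norm1Z ger0_norm ?harmonic_ge0 //.
    by rewrite ler_piMl ?norm1_ge0 // /harmonic invf_le1 ?ltr0Sn // ler1n.
  have Ck : C <= k%:R by near: k; exact: nbhs_infty_ger.
  by have := w_big k; lra.
- move=> k [_ [_ pi_tk]]; have [_ [_]] := opt_t k.
  by rewrite pi_tk risk_translate; have := @harmonic_gt0 R k; lra.
Unshelve. all: by end_near.
Qed.

Lemma compact_bounded_subseq_cvg : optR_compact_bounded -> optR_subseq_cvg.
Proof.
move=> bdd x xs zs xs_x opt_zs; have [C K_C] := bdd _ (cvg_compact_range xs_x).
have /choice [c /all_and2 [zs_c cC]] :
    forall k, exists c, zs k = lincomb b c /\ forall i, `|c i| <= C.
  by move=> k; apply: K_C; exists (xs k); [right; exists k | exact: opt_zs].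
exact: optR_bounded_selection_subseq xs_x opt_zs zs_c cC.
Qed.

Lemma usc_subseq_cvg : optR_usc -> optR_subseq_cvg.
Proof.
move=> usc x xs zs xs_x opt_zs.
have /choice [c zs_c] : forall k, exists c, zs k = lincomb b c.
  by move=> k; have [c] := (opt_zs k).1; exists c.
have [[C [phi [phi_incr cC]]] | c_y] := bounded_subseq_or_cvgy (fun k => norm1 (c k)).
  have [z [psi [opt_z [psi_incr zs_z]]]] :=
    @optR_bounded_selection_subseq (xs \o phi) (zs \o phi) x (c \o phi) C
      (cvg_subseq phi_incr xs_x) (fun k => opt_zs (phi k)) (fun k => zs_c (phi k))
      (fun k i => le_trans (ler_norm1 _ i) (cC k)).
  by exists z, (phi \o psi); split => //; split => // k l kl; apply/phi_incr/psi_incr.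
have [Cx Cx_bound] := usc_optR_bounded (usc x).
have [N _ c_big] := cvgry_gt c_y Cx.
apply: False_ind; apply: (usc_no_divergent_selection (t := fun k => c (k + N)) _ _ _ _ (usc x)).
- exact: cvg_comp_geq (fun k => leq_addr N k) xs_x.
- by move=> k; rewrite -zs_c; exact: opt_zs.
- exact: cvg_comp_geq (fun k => leq_addr N k) c_y.
- by move=> k /Cx_bound; rewrite leNgt c_big //= leq_addl.
Qed.

Lemma subseq_cvg_usc : optR_subseq_cvg -> optR_usc.
Proof.
move=> subseq x V oV optx_V; apply: contrapT => /forallNP no_W.
have [B [Bx B_cvg]] := first_countable_seq_cvg fcX x.
have /choice [yz /all_and3 [B_y opt_yz nV_z]] :
    forall j, exists yz : X * X, [/\ B j yz.1, optimal yz.1 yz.2 & ~ V yz.2].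
  move=> j; have := Bx j; rewrite nbhsE => -[W [oW Wx] WB].
  apply: contrapT => /forallNP no_yz; apply: (no_W W); split => //; split => // y Wy z opt_z.
  split; last by case: opt_z.
  by apply: contrapT => nVz; apply: (no_yz (y, z)); split => //; exact: WB.
have [z [phi [opt_z [_ zphi_z]]]] := subseq x _ _ (B_cvg _ B_y) opt_yz.
have [N _ zV] := zphi_z V (open_nbhs_nbhs (conj oV (optx_V z opt_z).1)).
exact: nV_z (phi N) (zV N (leqnn N)).
Qed.

Lemma subseq_cvg_compact_bounded : optR_subseq_cvg -> optR_compact_bounded.
Proof.
move=> subseq K cK; apply: contrapT => /forallNP unb.
have /choice [xc /all_and3 [K_x opt_x c_big]] : forall k : nat,
    exists xc : X * ('I_n -> R), [/\ K xc.1, optimal xc.1 (lincomb b xc.2) & k%:R < norm1 xc.2].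
  move=> k; apply: contrapT => /forallNP no_xc; apply: (unb k%:R) => z [y Ky opt_z].
  have [c zc] := opt_z.1; exists c; split => // i.
  apply: le_trans (ler_norm1 c i) _; rewrite leNgt; apply/negP => k_c.
  by apply: (no_xc (y, c)); split => //; rewrite /lincomb -zc.
have [p [phi [Kp phi_incr x_p]]] := compact_subseq_cvg fcX cK K_x.
have [z [psi [_ [psi_incr zs_z]]]] := subseq p _ _ x_p (fun k => opt_x (phi k)).
have [C C_bound] := cvg_lincomb_bounded hX hb (c := fun k => (xc (phi (psi k))).2) zs_z.
have [N _ CN] := nbhs_infty_ger C.
have N_le : N%:R <= (phi (psi N))%:R :> R.
  by rewrite ler_nat (leq_trans (increasing_geq psi_incr N)) // increasing_geq.
by have := C_bound N; have := c_big (phi (psi N)); have := CN N (leqnn N); lra.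
Qed.

End optimal_payoffs.

Theorem mainTheorem15 (R : realType) (X : tvsType R)
  (hX : hausdorff_space X) (fcX : first_countable X)
  (le : X -> X -> Prop) (hle : partial_order le)
  (n : nat) (b : 'I_n -> X) (hb : lin_indep b) (hn : (1 < n)%N)
  (pi : X -> R) (hpi : linear_on (span_set b) pi)
  (A : set X)
  (A1 : exists U, span_set b U /\ pos_cone le U /\ pi U = 1)
  (A2_closed : closed A) (A2_proper : A != setT) (A2_0 : A 0)
  (A2_mon : forall a p, A a -> pos_cone le p -> A (a + p))
  (A3_fin : forall x, [set pi z | z in [set z | span_set b z /\ A (x + z)]] !=set0 /\
                      has_lbound [set pi z | z in [set z | span_set b z /\ A (x + z)]])
  (A3_cont : continuous (rho (span_set b) A pi)) :
  let M := span_set b in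
  [/\ ((forall x, usc_at M A pi x) <->
       (forall K : set X, compact K -> bounded_in_span b (optR_set M A pi K))),
      ((forall K : set X, compact K -> bounded_in_span b (optR_set M A pi K)) <->
       (forall (x : X) (xs zs : nat -> X), xs @ \oo --> x ->
          (forall k, optR M A pi (xs k) (zs k)) ->
          exists z, exists phi : nat -> nat, optR M A pi x z /\
            {homo phi : k l / (k < l)%N} /\ (zs \o phi) @ \oo --> z))
    & ((forall x, usc_at M A pi x) <->
       (forall (x : X) (xs zs : nat -> X), xs @ \oo --> x ->
          (forall k, optR M A pi (xs k) (zs k)) ->
          exists z, exists phi : nat -> nat, optR M A pi x z /\
            {homo phi : k l / (k < l)%N} /\ (zs \o phi) @ \oo --> z))].
Proof.
move=> M; have [U [U_span [_ piU]]] := A1.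
have usc_sub := usc_subseq_cvg hpi A2_closed A3_cont U_span piU A3_fin hX fcX hb.
have cpt_sub := compact_bounded_subseq_cvg hpi A2_closed A3_cont.
have sub_usc := @subseq_cvg_usc _ _ _ b pi A fcX.
have sub_cpt := @subseq_cvg_compact_bounded _ _ _ b pi A hX fcX hb.
split; split.
- by move/usc_sub/sub_cpt.
- by move/cpt_sub/sub_usc.
- exact: cpt_sub.
- exact: sub_cpt.
- exact: usc_sub.
- exact: sub_usc.
Qed.
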